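(* Let $p$ be an odd prime with $p\equiv2\pmod3$, let $\theta\in\mathrm{Aut}(\mathbb{F}_{p^m})$ have order dividing $p^s$, and let $\mathcal C$ be a skew $\theta$-cyclic code of length $3p^s$ over $\mathbb{F}_{p^m}$. (a) If $m$ is odd, then $x^{3p^s}-1=(x^{p^s}-1)(x^{2p^s}+x^{p^s}+1)$ with central coprime factors and $\mathcal C=\mathcal C_1\oplus\mathcal C_2$, where $\mathcal C_1,\mathcal C_2$ are left ideals of $\mathbb{F}_{p^m}[x;\theta]/\langle x^{p^s}-1\rangle$ and $\mathbb{F}_{p^m}[x;\theta]/\langle x^{2p^s}+x^{p^s}+1\rangle$ respectively. Moreover $|\mathcal C|=|\mathcal C_1||\mathcal C_2|$, $\mathcal C^\perp=\mathcal C_1^\perp\oplus\mathcal C_2^\perp$ where $\mathcal C_1^\perp,\mathcal C_2^\perp$ are left ideals of the same two rings respectively, and $\mathcal C$ is self-dual iff $\mathcal C_1=\mathcal C_1^\perp$ and $\mathcal C_2=\mathcal C_2^\perp$. (b) If $m$ is even, then with $\omega\in\mathbb{F}_{p^m}^*$ a primitive cube root of unity, $\mathcal C=\mathcal C_1\oplus\mathcal C_2\oplus\mathcal C_3$, where $\mathcal C_i$ is a left ideal of $\mathbb{F}_{p^m}[x;\theta]/\langle x^{p^s}-\omega^{i-1}\rangle$ ($i=1,2,3$); moreover $|\mathcal C|=|\mathcal C_1||\mathcal C_2||\mathcal C_3|$, $\mathcal C^\perp=\mathcal C_1^\perp\oplus\mathcal C_2^\perp\oplus\mathcal C_3^\perp$,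 and $\mathcal C$ is self-dual iff $\mathcal C_1=\mathcal C_1^\perp$, $\mathcal C_2=\mathcal C_3^\perp$, $\mathcal C_3=\mathcal C_2^\perp$.
   Context: $\mathbb{F}_{p^m}[x;\theta]$ is the skew polynomial ring with $xa=\theta(a)x$. A skew $\theta$-cyclic code of length $N$ over $\mathbb{F}_{p^m}$ is a left ideal of $\mathbb{F}_{p^m}[x;\theta]/\langle x^N-1\rangle$. The decompositions are via the Chinese Remainder isomorphism for the stated factorization. $\mathcal C^\perp$ is the Euclidean dual (again skew $\theta$-cyclic); $\mathcal C_i^\perp$ denotes its component in the corresponding factor ring (in (b), the factor $x^{p^s}-\omega^{1-i}$). Self-dual means $\mathcal C=\mathcal C^\perp$. *)

From HB Require Import structures.
From mathcomp Require Import all_boot all_order all_algebra.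
Set Implicit Arguments. Unset Strict Implicit. Unset Printing Implicit Defensive.
Import GRing.Theory.
Local Open Scope ring_scope.

(* Skew polynomials F[x; theta] are represented by their coefficient lists,
   i.e. by {poly F}, with the skew product  (a x^i)(b x^j) = a theta^i(b) x^(i+j). *)
Definition smul (F : fieldType) (theta : F -> F) (a b : {poly F}) : {poly F} :=
  \sum_(i < size a) \sum_(j < size b) (a`_i * iter i theta b`_j) *: 'X^(i + j).

Fixpoint srem_rec (F : fieldType) (theta : F -> F) (f : {poly F}) (k : nat)
    (a : {poly F}) : {poly F} :=
  match k with
  | 0 => a
  | k'.+1 => if (size a < size f)%N then a
             else srem_rec theta f k'
                    (a - smul theta (lead_coef a *: 'X^(size a - size f)) f)
  end.

Definition srem (F : fieldType) (theta : F -> F) (f a : {poly F}) : {poly F} :=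
  srem_rec theta f (size a) a.

(* Elements of F[x;theta]/<f>, deg f = n, are represented by their coefficient
   row vectors of length n (canonical representatives of degree < n). *)
Definition qmul (F : fieldType) (theta : F -> F) (n : nat) (f : {poly F})
    (a b : 'rV[F]_n) : 'rV[F]_n :=
  poly_rV (srem theta f (smul theta (rVpoly a) (rVpoly b))).

Definition skew_left_ideal (F : finFieldType) (theta : F -> F) (n : nat) (f : {poly F})
    (C : {set 'rV[F]_n}) : Prop :=
  [/\ 0 \in C,
      (forall u v, u \in C -> v \in C -> u - v \in C) &
      (forall a u, u \in C -> qmul theta f a u \in C)].

Definition skew_cyclic (F : finFieldType) (theta : F -> F) (N : nat)
    (C : {set 'rV[F]_N}) : Prop :=
  skew_left_ideal theta ('X^N - 1) C.

(* Component in the factor ring F[x;theta]/<f> (deg f = n) of an element of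
   F[x;theta]/<x^N - 1>: the Chinese-remainder projection a |-> a mod f. *)
Definition crt_comp (F : fieldType) (theta : F -> F) (N n : nat) (f : {poly F})
    (a : 'rV[F]_N) : 'rV[F]_n :=
  poly_rV (srem theta f (rVpoly a)).

Definition euclid_dual (F : finFieldType) (N : nat) (C : {set 'rV[F]_N}) : {set 'rV[F]_N} :=
  [set v : 'rV[F]_N | [forall c in C, \sum_(i < N) c 0 i * v 0 i == 0]].
Arguments crt_comp [F] theta [N n] f a.

From HB Require Import structures.
From mathcomp Require Import all_boot all_order all_algebra.
From mathcomp Require Import finfield zify ring.
Set Implicit Arguments. Unset Strict Implicit. Unset Printing Implicit Defensive.
Import GRing.Theory.
Local Open Scope ring_scope.

(* Right division by a monic polynomial with theta-fixed coefficients is ordinary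
   polynomial division, so the Chinese remainder projections of F[x;theta]/<x^N - 1>
   are a |-> a mod f_j.  The moduli x^n - 1, x^2n + x^n + 1 and x^n - w^k, n = p^s,
   and the idempotents built from them are polynomials in x^n with theta-fixed
   coefficients, hence central because theta^n = 1.  Left-multiplying codewords by
   these idempotents lifts any choice of components back into C, which yields the
   decomposition of C and the product formula for |C|.  The Euclidean dual is again
   skew cyclic because the shift v |-> x v has order N and maps <c, v> to
   theta <c, v>.  Finally, 3 is invertible as p <> 3, and theta fixes w: theta w = w^i
   with i^(p^s) = 1 mod 3, which forces i = 1 since p^s is odd. *)

Section ProductImage.
Variables (aT T1 T2 T3 : finType) (g1 : aT -> T1) (g2 : aT -> T2) (g3 : aT -> T3).

Lemma imset_pair_setX (A : {set aT}) :
  (forall x1 x2, x1 \in A -> x2 \in A -> exists2 a, a \in A & g1 a = g1 x1 /\ g2 a = g2 x2) ->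
  [set (g1 a, g2 a) | a in A] = setX (g1 @: A) (g2 @: A).
Proof.
move=> Hlift; apply/setP => -[u v]; rewrite in_setX; apply/imsetP/andP.
  by case=> a Ha [-> ->]; rewrite !imset_f.
case=> /imsetP [x1 H1 ->] /imsetP [x2 H2 ->].
by have [a Ha [<- <-]] := Hlift _ _ H1 H2; exists a.
Qed.

Lemma eq_set_by_components2 (A B : {set aT}) :
  (forall a, a \in A <-> g1 a \in g1 @: A /\ g2 a \in g2 @: A) ->
  (forall a, a \in B <-> g1 a \in g1 @: B /\ g2 a \in g2 @: B) ->
  A = B <-> g1 @: A = g1 @: B /\ g2 @: A = g2 @: B.
Proof.
move=> HA HB; split=> [-> //|[E1 E2]]; apply/setP => a.
apply/idP/idP => Ha.
  by apply/HB; rewrite -E1 -E2; apply/HA.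
by apply/HA; rewrite E1 E2; apply/HB.
Qed.

Lemma eq_set_by_components3 (A B : {set aT}) :
  (forall a, a \in A <-> [/\ g1 a \in g1 @: A, g2 a \in g2 @: A & g3 a \in g3 @: A]) ->
  (forall a, a \in B <-> [/\ g1 a \in g1 @: B, g2 a \in g2 @: B & g3 a \in g3 @: B]) ->
  A = B <-> [/\ g1 @: A = g1 @: B, g2 @: A = g2 @: B & g3 @: A = g3 @: B].
Proof.
move=> HA HB; split=> [-> //|[E1 E2 E3]]; apply/setP => a.
apply/idP/idP => Ha.
  by apply/HB; rewrite -E1 -E2 -E3; apply/HA.
by apply/HA; rewrite E1 E2 E3; apply/HB.
Qed.

End ProductImage.

Section PolyFacts.
Variable F : fieldType.

Lemma ltn_size_sub_lead (p q : {poly F}) :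
  size q = size p -> lead_coef q = lead_coef p -> p != 0 -> (size (p - q)%R < size p)%N.
Proof.
move=> Hs Hl p0; have sp0 : (0 < size p)%N by rewrite size_poly_gt0.
rewrite -(prednK sp0) ltnS.
apply/leq_sizeP => j Hj; rewrite coefB.
have [->|Hjn] := eqVneq j (size p).-1; first by rewrite -{2}Hs -!lead_coefE Hl subrr.
have Hpj : (size p <= j)%N by rewrite -(prednK sp0) ltn_neqAle eq_sym Hjn.
by rewrite !nth_default ?subrr ?Hs.
Qed.

Lemma modp_dvdm (d m p : {poly F}) : d %| m -> (p %% m) %% d = p %% d.
Proof.
by move=> Hd; rewrite [in RHS](divp_eq p m) modpD (modp_eq0 (dvdp_mull _ Hd)) add0r.
Qed.

Lemma modp_sum (d : {poly F}) I (r : seq I) (P : pred I) (G : I -> {poly F}) :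
  (\sum_(i <- r | P i) G i) %% d = \sum_(i <- r | P i) (G i %% d).
Proof. by apply: (big_morph (fun p => p %% d)) => [x y|]; rewrite ?modpD ?mod0p. Qed.

Lemma size_rVpoly d (v : 'rV[F]_d) : (size (rVpoly v) <= d)%N.
Proof. exact: size_poly. Qed.

End PolyFacts.

Section SkewProduct.
Variables (F : fieldType) (theta : {rmorphism F -> F}).
Local Notation Th := (map_poly theta).

Lemma coef_iter_map i (b : {poly F}) j : (iter i Th b)`_j = iter i theta b`_j.
Proof. by elim: i => [|i IH] //=; rewrite coef_map IH. Qed.

Lemma size_iter_map i (b : {poly F}) : size (iter i Th b) = size b.
Proof. by elim: i => [|i IH] //=; rewrite size_map_poly IH. Qed.

Lemma iter_mapM i (p q : {poly F}) : iter i Th (p * q) = iter i Th p * iter i Th q.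
Proof. by elim: i => //= i ->; rewrite rmorphM. Qed.

Lemma iter_mapB i (p q : {poly F}) : iter i Th (p - q) = iter i Th p - iter i Th q.
Proof. by elim: i => //= i ->; rewrite rmorphB. Qed.

Lemma iter_map_id i (f : {poly F}) : Th f = f -> iter i Th f = f.
Proof. by move=> Hf; elim: i => //= i ->. Qed.

Lemma smulE a b : smul theta a b = \sum_(i < size a) (a`_i *: 'X^i) * iter i Th b.
Proof.
apply: eq_bigr => i _; rewrite -[iter i Th b]coefK size_iter_map poly_def mulr_sumr.
apply: eq_bigr => j _.
by rewrite coef_iter_map -scalerAl -scalerAr scalerA exprD.
Qed.

Lemma smul_idr a f : Th f = f -> smul theta a f = a * f.
Proof.
move=> Hf; rewrite -{2}[a]coefK poly_def mulr_suml smulE.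
by apply: eq_bigr => i _; rewrite iter_map_id.
Qed.

Lemma smulBr a b c : smul theta a (b - c) = smul theta a b - smul theta a c.
Proof. by rewrite !smulE -sumrB; apply: eq_bigr => i _; rewrite iter_mapB mulrBr. Qed.

Lemma smul_mulr a q f : Th f = f -> smul theta a (q * f) = smul theta a q * f.
Proof.
move=> Hf; rewrite !smulE mulr_suml; apply: eq_bigr => i _.
by rewrite iter_mapM (iter_map_id _ Hf) mulrA.
Qed.

Lemma smul_modp b y f : Th f = f -> smul theta b (y %% f) %% f = smul theta b y %% f.
Proof.
move=> Hf; have -> : y %% f = y - y %/ f * f by rewrite {2}(divp_eq y f) addrC addKr.
by rewrite smulBr smul_mulr // modpD modpN modp_mull oppr0 addr0.
Qed.

Lemma smul_central (e y : {poly F}) :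
    (forall i, e`_i != 0 -> forall x, iter i theta x = x) -> smul theta e y = e * y.
Proof.
move=> He; rewrite -{2}[e]coefK poly_def mulr_suml smulE; apply: eq_bigr => i _.
have [->|nz] := eqVneq e`_i 0; first by rewrite !scale0r !mul0r.
by congr (_ * _); apply/polyP => j; rewrite coef_iter_map He.
Qed.

(* Each step of [srem_rec] subtracts [(lc a x^d) * f], an ordinary product because
   [f] is theta-fixed, and lowers the degree of [a]. *)
Lemma srem_recE (f : {poly F}) k (a : {poly F}) : f \is monic -> Th f = f ->
  (size a < k + size f)%N -> srem_rec theta f k a = a %% f.
Proof.
move=> Hm Hf; elim: k a => [|k IH] a Ha /=; first by rewrite modp_small.
case: ifP => [Haf|/negbT]; first by rewrite modp_small.
rewrite -leqNgt => Hfa; have a0 : a != 0.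
  by rewrite -size_poly_gt0 (leq_trans _ Hfa) // size_poly_gt0 monic_neq0.
set q := lead_coef a *: 'X^(size a - size f).
have q0 : q != 0 by rewrite scaler_eq0 lead_coef_eq0 (negbTE a0) -size_poly_eq0 size_polyXn.
rewrite smul_idr // IH; first by rewrite modpD modpN modp_mull oppr0 addr0.
have Hsq : size (q * f) = size a.
  rewrite size_Mmonic // size_scale ?lead_coef_eq0 // size_polyXn.
  by rewrite addSn /= subnK.
have Hlq : lead_coef (q * f) = lead_coef a.
  by rewrite lead_coef_Mmonic // lead_coefZ lead_coefXn mulr1.
by apply: leq_trans (ltn_size_sub_lead Hsq Hlq a0) _; rewrite -ltnS -addSn.
Qed.

Lemma sremE (f a : {poly F}) : f \is monic -> Th f = f -> srem theta f a = a %% f.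
Proof.
by move=> Hm Hf; apply: srem_recE; rewrite // -addn1 leq_add2l size_poly_gt0 monic_neq0.
Qed.

End SkewProduct.


Section SkewQuotient.
Variables (F : finFieldType) (theta : {rmorphism F -> F}).
Local Notation Th := (map_poly theta).

Definition fixed_monic n (f : {poly F}) := [/\ f \is monic, Th f = f & size f = n.+1].

Lemma size_modp_fixed_monic n (f y : {poly F}) :
  fixed_monic n f -> (size (y %% f)%R <= n)%N.
Proof. by case=> Hm _ Hs; rewrite -ltnS -Hs ltn_modp monic_neq0. Qed.

Lemma crt_compE N n (f : {poly F}) (a : 'rV[F]_N) : fixed_monic n f ->
  crt_comp theta (n := n) f a = poly_rV (rVpoly a %% f).
Proof. by case=> Hm Hf _; rewrite /crt_comp sremE. Qed.

Lemma qmulE n (f : {poly F}) (a u : 'rV[F]_n) : fixed_monic n f ->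
  qmul theta f a u = poly_rV (smul theta (rVpoly a) (rVpoly u) %% f).
Proof. by case=> Hm Hf _; rewrite /qmul sremE. Qed.

Lemma crt_comp_eq N n (f : {poly F}) (a b : 'rV[F]_N) : fixed_monic n f ->
  crt_comp theta (n := n) f a = crt_comp theta f b <-> rVpoly a %% f = rVpoly b %% f.
Proof.
move=> Hf; rewrite !crt_compE //; split=> [|-> //].
by move/(congr1 rVpoly); rewrite !poly_rV_K // (size_modp_fixed_monic _ Hf).
Qed.

Definition crt_code N n (f : {poly F}) (C : {set 'rV[F]_N}) : {set 'rV[F]_n} :=
  [set crt_comp theta f a | a in C].

Lemma left_ideal_add n (f : {poly F}) (C : {set 'rV[F]_n}) u v :
  skew_left_ideal theta f C -> u \in C -> v \in C -> u + v \in C.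
Proof. by case=> H0 HB _ Hu Hv; have := HB _ _ Hu (HB _ _ H0 Hv); rewrite sub0r opprK. Qed.

Lemma left_ideal_sum n (f : {poly F}) (C : {set 'rV[F]_n}) I (r : seq I) (P : pred I) G :
  skew_left_ideal theta f C -> (forall i, P i -> G i \in C) -> \sum_(i <- r | P i) G i \in C.
Proof.
move=> HC HG; apply: (big_ind (fun x => x \in C)) => //; first by case: HC.
by move=> x y; apply: left_ideal_add HC.
Qed.

Section CyclicModulus.
Variable N : nat.
Hypothesis N_gt0 : (0 < N)%N.
Local Notation xN1 := ('X^N - 1 : {poly F}).

Lemma fixed_monic_xN1 : fixed_monic N xN1.
Proof. by rewrite /fixed_monic rmorphB /= map_polyXn rmorph1 -polyC1 monicXnsubC ?size_XnsubC. Qed.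

Lemma crt_code_left_ideal n (f : {poly F}) (C : {set 'rV[F]_N}) :
  fixed_monic n f -> f %| xN1 -> skew_cyclic theta C -> skew_left_ideal theta f (crt_code n f C).
Proof.
move=> Hf Hd [C0 CB CM]; have HM := fixed_monic_xN1.
have HnN : (n <= N)%N.
  have [_ _ Hs] := Hf; have [Mm _ Ms] := HM.
  by rewrite -ltnS -Hs -Ms dvdp_leq ?monic_neq0.
split.
- apply/imsetP; exists 0 => //; rewrite crt_compE // linear0 mod0p.
  by apply/rowP => i; rewrite !mxE coef0.
- move=> u v /imsetP [a Ha ->] /imsetP [b Hb ->]; apply/imsetP; exists (a - b).
    exact: CB.
  by rewrite !crt_compE // !linearB /= modpD modpN linearB.
move=> b u /imsetP [c Hc ->]; apply/imsetP.
exists (qmul theta xN1 (poly_rV (rVpoly b)) c); first exact: CM.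
rewrite !crt_compE // !qmulE // !poly_rV_K ?(leq_trans (size_poly _ _) HnN)
  ?(size_modp_fixed_monic _ HM) ?(size_modp_fixed_monic _ Hf) //.
by case: Hf => _ Hfix _; rewrite modp_dvdm // smul_modp.
Qed.

(* The second clause says that a residue modulo x^N - 1 is determined by its
   remainders modulo the [f j]. *)
Definition crt_factors k (f : 'I_k -> {poly F}) : Prop :=
  (forall j, f j %| xN1) /\
  (forall y : {poly F}, (size y <= N)%N -> (forall j, f j %| y) -> y = 0).

Definition crt_idempotents k (f e : 'I_k -> {poly F}) : Prop :=
  [/\ forall i y, smul theta (e i) y = e i * y, forall i, (size (e i) <= N)%N &
      forall i j, e i %% f j = (i == j)%:R].

Section ChineseRemainder.
Variables (k : nat) (f e : 'I_k -> {poly F}).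
Hypotheses (Hf : crt_factors f) (He : crt_idempotents f e).

Lemma qmul_idempotent_mod i j (c : 'rV[F]_N) :
  rVpoly (qmul theta xN1 (poly_rV (e i)) c) %% f j = if i == j then rVpoly c %% f j else 0.
Proof.
have [Fd _] := Hf; have [Ec Es Ed] := He; have HM := fixed_monic_xN1.
rewrite qmulE // !poly_rV_K ?(size_modp_fixed_monic _ HM) //.
rewrite modp_dvdm // Ec mulrC -modp_mul Ed.
by case: eqP => _; rewrite ?mulr1 ?mulr0 ?mod0p.
Qed.

Lemma crt_lift (C : {set 'rV[F]_N}) (c : 'I_k -> 'rV[F]_N) :
  skew_cyclic theta C -> (forall j, c j \in C) ->
  exists2 a, a \in C & forall j, rVpoly a %% f j = rVpoly (c j) %% f j.
Proof.
move=> HC Hc; exists (\sum_i qmul theta xN1 (poly_rV (e i)) (c i)).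
  by apply: (left_ideal_sum _ HC) => i _; case: HC => _ _; apply.
move=> j; rewrite linear_sum modp_sum (bigD1 j) //= big1 ?addr0.
  by rewrite qmul_idempotent_mod eqxx.
by move=> i /negbTE Hij; rewrite qmul_idempotent_mod Hij.
Qed.

Lemma crt_rV_inj (a b : 'rV[F]_N) :
  (forall j, rVpoly a %% f j = rVpoly b %% f j) -> a = b.
Proof.
have [_ Fsep] := Hf; move=> Hab; apply: (can_inj rVpolyK); apply/eqP.
rewrite -subr_eq0; apply/eqP/Fsep => [|j].
  by rewrite -linearB size_rVpoly.
by apply/modp_eq0P; rewrite modpD modpN Hab subrr.
Qed.

End ChineseRemainder.

Lemma crt_decomposition2 n1 n2 (f1 f2 e1 e2 : {poly F}) (C : {set 'rV[F]_N}) :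
  let f := tnth [tuple f1; f2] in crt_factors f -> crt_idempotents f (tnth [tuple e1; e2]) ->
  fixed_monic n1 f1 -> fixed_monic n2 f2 -> skew_cyclic theta C ->
  (forall a, a \in C <-> crt_comp theta f1 a \in crt_code n1 f1 C /\
                         crt_comp theta f2 a \in crt_code n2 f2 C) /\
  #|C| = (#|crt_code n1 f1 C| * #|crt_code n2 f2 C|)%N.
Proof.
move=> f Hf He Hf1 Hf2 HC.
pose g1 := @crt_comp F theta N n1 f1; pose g2 := @crt_comp F theta N n2 f2.
have Hinj : injective (fun a => (g1 a, g2 a)).
  move=> a b [/(crt_comp_eq _ _ Hf1) E1 /(crt_comp_eq _ _ Hf2) E2].
  by apply: (crt_rV_inj Hf) => -[[|[|//]] Hj].
have HX : [set (g1 a, g2 a) | a in C] = setX (crt_code n1 f1 C) (crt_code n2 f2 C).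
  apply: imset_pair_setX => x1 x2 H1 H2.
  have [|a Ha Hj] := crt_lift Hf He (c := tnth [tuple x1; x2]) HC; first by case=> -[|[|]].
  exists a => //; rewrite !crt_comp_eq //.
  by split; [exact: (Hj ord0) | exact: (Hj (lift ord0 ord0))].
split=> [a|]; last by rewrite -cardsX -HX card_imset.
by rewrite -(mem_imset _ _ Hinj) HX in_setX; split=> /andP.
Qed.

Lemma crt_decomposition3 n1 n2 n3 (f1 f2 f3 e1 e2 e3 : {poly F}) (C : {set 'rV[F]_N}) :
  let f := tnth [tuple f1; f2; f3] in
  crt_factors f -> crt_idempotents f (tnth [tuple e1; e2; e3]) ->
  fixed_monic n1 f1 -> fixed_monic n2 f2 -> fixed_monic n3 f3 -> skew_cyclic theta C ->
  (forall a, a \in C <-> [/\ crt_comp theta f1 a \in crt_code n1 f1 C,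
                             crt_comp theta f2 a \in crt_code n2 f2 C &
                             crt_comp theta f3 a \in crt_code n3 f3 C]) /\
  #|C| = (#|crt_code n1 f1 C| * #|crt_code n2 f2 C| * #|crt_code n3 f3 C|)%N.
Proof.
move=> f Hf He Hf1 Hf2 Hf3 HC.
pose g1 := @crt_comp F theta N n1 f1; pose g2 := @crt_comp F theta N n2 f2.
pose g3 := @crt_comp F theta N n3 f3.
have Hinj : injective (fun a => (g1 a, (g2 a, g3 a))).
  move=> a b [/(crt_comp_eq _ _ Hf1) E1 /(crt_comp_eq _ _ Hf2) E2 /(crt_comp_eq _ _ Hf3) E3].
  by apply: (crt_rV_inj Hf) => -[[|[|[|//]]] Hj].
have Hlift x1 x2 x3 : x1 \in C -> x2 \in C -> x3 \in C ->
    exists2 a, a \in C & [/\ g1 a = g1 x1, g2 a = g2 x2 & g3 a = g3 x3].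
  move=> H1 H2 H3; have [|a Ha Hj] := crt_lift Hf He (c := tnth [tuple x1; x2; x3]) HC.
    by case=> -[|[|[|]]].
  exists a => //; split; [apply/(crt_comp_eq _ _ Hf1); exact: (Hj ord0)
    | apply/(crt_comp_eq _ _ Hf2); exact: (Hj (lift ord0 ord0))
    | apply/(crt_comp_eq _ _ Hf3); exact: (Hj (lift ord0 (lift ord0 ord0)))].
have HX : [set (g1 a, (g2 a, g3 a)) | a in C] =
          setX (crt_code n1 f1 C) (setX (crt_code n2 f2 C) (crt_code n3 f3 C)).
  rewrite imset_pair_setX => [|x1 x23 H1 H23]; last first.
    by have [a Ha [E1 E2 E3]] := Hlift _ _ _ H1 H23 H23; exists a; rewrite ?E1 ?E2 ?E3.
  rewrite imset_pair_setX // => x2 x3 H2 H3.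
  by have [a Ha [_ E2 E3]] := Hlift _ _ _ H2 H2 H3; exists a; rewrite ?E2 ?E3.
split=> [a|]; last by rewrite -mulnA -!cardsX -HX card_imset.
by rewrite -(mem_imset _ _ Hinj) HX !in_setX; split=> /and3P.
Qed.

End CyclicModulus.
End SkewQuotient.

Section EuclideanDual.
Variables (F : finFieldType) (theta : {rmorphism F -> F}).
Local Notation Th := (map_poly theta).
Variable N : nat.
Hypothesis N_gt0 : (0 < N)%N.
Local Notation xN1 := ('X^N - 1 : {poly F}).

Let HM : fixed_monic theta N xN1 := fixed_monic_xN1 theta N_gt0.

(* Left multiplication by x in F[x;theta]/<x^N - 1>, since x v = theta(v) x. *)
Definition skew_shift (v : 'rV[F]_N) : 'rV[F]_N := poly_rV (('X * Th (rVpoly v)) %% xN1).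

Lemma iter_skew_shift k (v : 'rV[F]_N) :
  iter k skew_shift v = poly_rV (('X^k * iter k Th (rVpoly v)) %% xN1).
Proof.
have [HMm HMf HMs] := HM.
elim: k => [|k IH] /=.
  by rewrite mul1r modp_small ?rVpolyK // HMs ltnS size_rVpoly.
rewrite IH /skew_shift poly_rV_K ?(size_modp_fixed_monic _ HM) //.
by rewrite map_modp HMf modp_mul rmorphM /= map_polyXn mulrA -exprS.
Qed.

Lemma qmul_skew_shift (a v : 'rV[F]_N) :
  qmul theta xN1 a v = \sum_(i < size (rVpoly a)) (rVpoly a)`_i *: iter i skew_shift v.
Proof.
rewrite qmulE // smulE modp_sum linear_sum; apply: eq_bigr => i _.
by rewrite iter_skew_shift -scalerAl modpZl linearZ.
Qed.

Lemma skew_shift_coef (v : 'rV[F]_N) (j : 'I_N) :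
  skew_shift v 0 j = theta (v 0 (ord_pred j)).
Proof.
set y := rVpoly v; set c := theta y`_N.-1; set r := 'X * Th y - c *: xN1.
have Hr : (size r <= N)%N.
  apply/leq_sizeP => i Hi; rewrite /r coefB coefXM coefZ coefB coefXn coef1 coef_map.
  have -> : (i == 0%N) = false by apply/eqP; lia.
  have [->|HiN] := eqVneq i N; first by rewrite subr0 mulr1 /c subrr.
  have Hlt : (N < i)%N by rewrite ltn_neqAle eq_sym HiN.
  rewrite (leq_sizeP _ _ (size_rVpoly v) i.-1); last by rewrite -ltnS (ltn_predK Hlt).
  by rewrite raddf0 subrr mulr0 subr0.
have Er : ('X * Th y) %% xN1 = r.
  rewrite -[X in X %% _](subrK (c *: xN1)) -/r modpD modpZl modpp scaler0 addr0.
  by case: HM => _ _ Hs; rewrite modp_small // Hs.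
rewrite /skew_shift -/y Er mxE /r coefB coefXM coefZ coefB coefXn coef1 coef_map.
rewrite (ltn_eqF (ltn_ord j)) -coef_rVpoly_ord -/y /=; case: eqP => [j0|/eqP j0].
  by rewrite sub0r sub0r mulrN mulr1 opprK j0 add0n modn_small // prednK.
have -> : ((j + N).-1 = j.-1 + N)%N by move: j0; rewrite -lt0n; lia.
by rewrite subrr mulr0 subr0 modnDr modn_small // (leq_ltn_trans (leq_pred _) (ltn_ord j)).
Qed.

Lemma dot_skew_shift (u v : 'rV[F]_N) :
  \sum_(i < N) skew_shift u 0 i * skew_shift v 0 i = theta (\sum_(i < N) u 0 i * v 0 i).
Proof.
rewrite rmorph_sum [in RHS](reindex_inj (@ord_pred_inj N)) /=.
by apply: eq_bigr => i _; rewrite !skew_shift_coef rmorphM.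
Qed.

Lemma skew_shift_cyclic (C : {set 'rV[F]_N}) c : (1 < N)%N ->
  skew_cyclic theta C -> c \in C -> skew_shift c \in C.
Proof.
move=> N_gt1 [_ _ CM] Hc; have := CM (poly_rV 'X) c Hc.
rewrite qmul_skew_shift poly_rV_K ?size_polyX // !big_ord_recl big_ord0 /= !coefX /=.
by rewrite scale0r add0r scale1r addr0.
Qed.

Hypothesis theta_N : forall x, iter N theta x = x.

Lemma iter_skew_shift_id (c : 'rV[F]_N) : iter N skew_shift c = c.
Proof.
rewrite iter_skew_shift.
have -> : iter N Th (rVpoly c) = rVpoly c by apply/polyP => j; rewrite coef_iter_map theta_N.
rewrite -[X in X * _](subrK 1) mulrDl mul1r modpD modp_mulr add0r.
by case: HM => _ _ Hs; rewrite modp_small ?rVpolyK // Hs ltnS size_rVpoly.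
Qed.

Lemma mem_euclid_dual (C : {set 'rV[F]_N}) v :
  v \in euclid_dual C <-> forall c, c \in C -> \sum_(i < N) c 0 i * v 0 i = 0.
Proof. by rewrite inE; split=> [/forall_inP H c /H/eqP | H]; last apply/forall_inP => c /H ->. Qed.

Lemma euclid_dual_lin (C : {set 'rV[F]_N}) (k : F) u v :
  u \in euclid_dual C -> v \in euclid_dual C -> k *: u + v \in euclid_dual C.
Proof.
move=> /mem_euclid_dual Hu /mem_euclid_dual Hv; apply/mem_euclid_dual => c Hc.
under eq_bigr do rewrite !mxE mulrDr mulrCA.
by rewrite big_split -mulr_sumr /= Hu // Hv // mulr0 addr0.
Qed.

Lemma euclid_dual_skew_cyclic (C : {set 'rV[F]_N}) : (1 < N)%N ->
  skew_cyclic theta C -> skew_cyclic theta (euclid_dual C).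
Proof.
move=> N_gt1 HC; set D := euclid_dual C.
have D0 : 0 \in D by apply/mem_euclid_dual => c _; apply: big1 => i _; rewrite mxE mulr0.
have DZ k u : u \in D -> k *: u \in D by move=> Du; rewrite -[_ *: u]addr0 euclid_dual_lin.
have Dshift u : u \in D -> skew_shift u \in D.
  move=> /mem_euclid_dual Du; apply/mem_euclid_dual => c Hc.
  have Hc' : iter N.-1 skew_shift c \in C.
    by elim: N.-1 => [|k IH] //=; apply: skew_shift_cyclic.
  have -> : c = skew_shift (iter N.-1 skew_shift c).
    by rewrite -iterS prednK // iter_skew_shift_id.
  by rewrite dot_skew_shift Du // rmorph0.
split=> // [u v Du Dv|a u Du].
  by rewrite -scaleN1r addrC euclid_dual_lin // DZ.
rewrite qmul_skew_shift; apply: (big_ind (fun x => x \in D)) => [||i _].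
- exact: D0.
- by move=> x y Dx Dy; rewrite -[x]scale1r euclid_dual_lin.
by apply: DZ; elim: (nat_of_ord i) => [|k IH] //=; apply: Dshift.
Qed.

End EuclideanDual.

Section PolynomialsInXn.
Variables (F : finFieldType) (theta : {rmorphism F -> F}) (n : nat).
Hypotheses (n_gt0 : (0 < n)%N) (theta_n : forall x, iter n theta x = x).

Lemma iter_theta_mul k x : iter (k * n) theta x = x.
Proof. by elim: k => [|k IH] //=; rewrite mulSn iterD IH theta_n. Qed.

Lemma exprXnM k : 'X^(k * n) = 'X^n ^+ k :> {poly F}.
Proof. by rewrite mulnC exprM. Qed.

Definition quadXn (a b c : F) : {poly F} := a%:P + b *: 'X^n + c *: 'X^(2 * n).

Lemma smul_quadXn a b c y : smul theta (quadXn a b c) y = quadXn a b c * y.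
Proof.
apply: smul_central => i; rewrite !coefD coefC !coefZ !coefXn => Hi x.
have [->|H0] := eqVneq i 0%N; first by [].
have [->|H1] := eqVneq i n; first exact: theta_n.
have [->|H2] := eqVneq i (2 * n)%N; first exact: (iter_theta_mul 2).
by move: Hi; rewrite (negbTE H0) (negbTE H1) (negbTE H2) !mulr0 !addr0 eqxx.
Qed.

Lemma size_quadXn a b c : (size (quadXn a b c) <= (2 * n).+1)%N.
Proof.
rewrite /quadXn; apply: (leq_trans (size_polyD _ _)); rewrite geq_max.
rewrite (leq_trans (size_scale_leq _ _)) ?size_polyXn // andbT.
apply: (leq_trans (size_polyD _ _)); rewrite geq_max size_polyC.
rewrite (leq_trans (size_scale_leq _ _)) ?size_polyXn ?andbT; last lia.
by case: (_ != 0); lia.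
Qed.

Lemma quadXn_mod a b c d : quadXn a b c %% ('X^n - d%:P) = (a + b * d + c * d ^+ 2)%:P.
Proof.
have -> : quadXn a b c =
    (b%:P + c%:P * ('X^n + d%:P)) * ('X^n - d%:P) + (a + b * d + c * d ^+ 2)%:P.
  by rewrite /quadXn exprXnM -!mul_polyC !polyCD !polyCM; ring.
rewrite modpD modp_mull add0r modp_small // size_polyC size_XnsubC //.
by case: (_ != 0).
Qed.

Lemma quadXn_mod1 a b c : quadXn a b c %% ('X^n - 1) = (a + b + c)%:P.
Proof. by rewrite -[X in 'X^n - X]polyC1 quadXn_mod expr1n !mulr1. Qed.

Lemma fixed_monic_XnsubC (d : F) : theta d = d -> fixed_monic theta n ('X^n - d%:P).
Proof.
by move=> Hd; rewrite /fixed_monic rmorphB /= map_polyXn map_polyC /= Hd monicXnsubC ?size_XnsubC.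
Qed.

Lemma XnsubC_dvd (d : F) : d ^+ 3 = 1 -> 'X^n - d%:P %| 'X^(3 * n) - 1.
Proof.
move=> Hd; apply/dvdpP; exists (quadXn (d ^+ 2) d 1).
rewrite /quadXn !exprXnM scale1r -!mul_polyC -polyC1 -Hd.
by rewrite !exprS expr0 mulr1 !polyCM; ring.
Qed.

Lemma coprimep_XnsubC (d1 d2 : F) : d1 != d2 -> coprimep ('X^n - d1%:P) ('X^n - d2%:P).
Proof.
move=> Hd; apply/Bezout_eq1_coprimepP.
exists ((d2 - d1)^-1%:P, - (d2 - d1)^-1%:P) => /=.
have -> : (d2 - d1)^-1%:P * ('X^n - d1%:P) + - (d2 - d1)^-1%:P * ('X^n - d2%:P)
        = (d2 - d1)^-1%:P * (d2 - d1)%:P by rewrite polyCB; ring.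
by rewrite -polyCM mulVf // subr_eq0 eq_sym.
Qed.

End PolynomialsInXn.

Section TwoFactors.
Variables (F : finFieldType) (theta : {rmorphism F -> F}) (n : nat).
Hypotheses (n_gt0 : (0 < n)%N) (theta_n : forall x, iter n theta x = x).
Hypothesis three_neq0 : (3%:R : F) != 0.
Local Notation f1 := ('X^n - 1 : {poly F}).
Local Notation f2 := ('X^(2 * n) + 'X^n + 1 : {poly F}).
Local Notation t := (3%:R^-1 : F).

Lemma f1_quadXn : f1 = quadXn n (-1) 1 0.
Proof. by rewrite /quadXn scale1r scale0r addr0 polyCN addrC. Qed.

Lemma f2_quadXn : f2 = quadXn n 1 1 1.
Proof. by rewrite /quadXn !scale1r; ring. Qed.

Lemma fixed_monic_f1 : fixed_monic theta n f1.
Proof. by rewrite -polyC1; apply: fixed_monic_XnsubC; rewrite ?rmorph1. Qed.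

Lemma fixed_monic_f2 : fixed_monic theta (2 * n) f2.
Proof.
have Hs : size ('X^(2 * n) : {poly F}) = (2 * n).+1 by rewrite size_polyXn.
have Hlt : (size ('X^n + 1 : {poly F})%R < (2 * n).+1)%N.
  by rewrite -polyC1 size_XnaddC //; lia.
split.
- by apply/monicP; rewrite -addrA lead_coefDl ?lead_coefXn // Hs.
- by rewrite !rmorphD /= !map_polyXn rmorph1.
by rewrite -addrA size_polyDl ?Hs.
Qed.

Lemma f1_mul_f2 : f1 * f2 = 'X^(3 * n) - 1.
Proof. by rewrite !exprXnM; ring. Qed.

Lemma f1_f2_bezout : - (t%:P * ('X^n + 2%:R)) * f1 + t%:P * f2 = 1.
Proof.
have -> : - (t%:P * ('X^n + 2%:R)) * f1 + t%:P * f2 = t%:P * 3%:R.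
  by rewrite exprXnM; ring.
by rewrite -polyC_natr -polyCM mulVf.
Qed.

(* [f2 / 3] and [1 - f2 / 3], written in the form [quadXn] to exhibit centrality. *)
Definition idem1 := quadXn n t t t.
Definition idem2 := quadXn n (1 - t) (- t) (- t).

Lemma crt_factors_f1_f2 : crt_factors (3 * n) (tnth [tuple f1; f2]).
Proof.
split=> [|y Hy Hdvd].
  by case=> -[|[|//]] Hj; rewrite -f1_mul_f2 ?dvdp_mulIl ?dvdp_mulIr.
have : f1 * f2 %| y.
  rewrite Gauss_dvdp ?(Hdvd ord0) ?(Hdvd (lift ord0 ord0)) //.
  by apply/Bezout_eq1_coprimepP; exists (- (t%:P * ('X^n + 2%:R)), t%:P); apply: f1_f2_bezout.
apply: contraTeq => y0; apply/negP => /(dvdp_leq y0).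
by rewrite f1_mul_f2 -polyC1 size_XnsubC ?muln_gt0 ?n_gt0 // ltnNge Hy.
Qed.

Lemma three_inv_sum : t + t + t = 1.
Proof. by rewrite -[RHS](mulVf three_neq0); ring. Qed.

Lemma idem1_mod_f1 : idem1 %% f1 = 1.
Proof. by rewrite quadXn_mod1 // three_inv_sum. Qed.

Lemma idem2_mod_f1 : idem2 %% f1 = 0.
Proof.
rewrite quadXn_mod1 //; have -> : 1 - t + - t + - t = 1 - (t + t + t) by ring.
by rewrite three_inv_sum subrr.
Qed.

Lemma idem1_mod_f2 : idem1 %% f2 = 0.
Proof.
have -> : idem1 = t *: f2 by rewrite f2_quadXn /idem1 /quadXn !scalerDr scale_polyC !scalerA !mulr1.
by rewrite modpZl modpp scaler0.
Qed.

Lemma idem2_mod_f2 : idem2 %% f2 = 1.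
Proof.
have -> : idem2 = 1 - t *: f2.
  rewrite f2_quadXn /idem2 /quadXn !scalerDr scale_polyC !scalerA !mulr1 polyCB.
  by rewrite !scaleNr !opprD !addrA.
rewrite modpD modpN modpZl modpp scaler0 subr0 modp_small //.
by case: fixed_monic_f2 => _ _ ->; rewrite size_poly1 ltnS muln_gt0 n_gt0.
Qed.

Lemma crt_idempotents_f1_f2 :
  crt_idempotents theta (3 * n) (tnth [tuple f1; f2]) (tnth [tuple idem1; idem2]).
Proof.
split.
- by case=> -[|[|//]] Hi y /=; rewrite smul_quadXn.
- by case=> -[|[|//]] Hi /=; apply: leq_trans (size_quadXn _ _ _ _) _; lia.
case=> -[|[|//]] Hi [[|[|//]] Hj]; rewrite !(tnth_nth 0) /=.
- exact: idem1_mod_f1.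
- exact: idem1_mod_f2.
- exact: idem2_mod_f1.
- exact: idem2_mod_f2.
Qed.

Lemma skew_cyclic_decomposition2 (C : {set 'rV[F]_(3 * n)}) : skew_cyclic theta C ->
  [/\ 'X^(3 * n) - 1 = smul theta f1 f2,
      (forall a, smul theta a f1 = smul theta f1 a),
      (forall a, smul theta a f2 = smul theta f2 a),
      (exists u v, smul theta u f1 + smul theta v f2 = 1) &
   exists (C1 : {set 'rV[F]_n}) (C2 : {set 'rV[F]_(2 * n)})
          (D1 : {set 'rV[F]_n}) (D2 : {set 'rV[F]_(2 * n)}),
     [/\ [/\ skew_left_ideal theta f1 C1, skew_left_ideal theta f2 C2,
             skew_left_ideal theta f1 D1 & skew_left_ideal theta f2 D2],
         (forall a, a \in C <-> (crt_comp theta f1 a \in C1 /\ crt_comp theta f2 a \in C2)),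
         #|C| = (#|C1| * #|C2|)%N,
         (forall a, a \in euclid_dual C <->
                    (crt_comp theta f1 a \in D1 /\ crt_comp theta f2 a \in D2)) &
         (C = euclid_dual C <-> (C1 = D1 /\ C2 = D2))]].
Proof.
move=> HC; have N_gt0 : (0 < 3 * n)%N by rewrite muln_gt0 n_gt0.
have [[Fd _] He] := (crt_factors_f1_f2, crt_idempotents_f1_f2).
have [Hf1 Hf2] := (fixed_monic_f1, fixed_monic_f2).
have [_ f1_fixed _] := Hf1; have [_ f2_fixed _] := Hf2.
have HD : skew_cyclic theta (euclid_dual C).
  by apply: (euclid_dual_skew_cyclic N_gt0 (iter_theta_mul theta_n 3)) => //; lia.
have [Cmem Ccard] := crt_decomposition2 N_gt0 crt_factors_f1_f2 He Hf1 Hf2 HC.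
have [Dmem _] := crt_decomposition2 N_gt0 crt_factors_f1_f2 He Hf1 Hf2 HD.
split.
- by rewrite smul_idr // f1_mul_f2.
- by move=> a; rewrite smul_idr // f1_quadXn smul_quadXn // mulrC.
- by move=> a; rewrite smul_idr // f2_quadXn smul_quadXn // mulrC.
- exists (- (t%:P * ('X^n + 2%:R))), t%:P.
  by rewrite !smul_idr // f1_f2_bezout.
exists (crt_code theta n f1 C), (crt_code theta (2 * n) f2 C).
exists (crt_code theta n f1 (euclid_dual C)), (crt_code theta (2 * n) f2 (euclid_dual C)).
have [Fd1 Fd2] : f1 %| 'X^(3 * n) - 1 /\ f2 %| 'X^(3 * n) - 1.
  by split; [apply: (Fd ord0) | apply: (Fd (lift ord0 ord0))].
split=> //; first by split; apply: crt_code_left_ideal.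
exact: eq_set_by_components2.
Qed.

End TwoFactors.

Lemma cube_root_sum (F : idomainType) (z : F) : z ^+ 3 = 1 -> z != 1 -> 1 + z + z ^+ 2 = 0.
Proof.
move=> z3 z1; have : (z - 1) * (1 + z + z ^+ 2) = 0.
  have -> : (z - 1) * (1 + z + z ^+ 2) = z ^+ 3 - 1 by ring.
  by rewrite z3 subrr.
by move/eqP; rewrite mulf_eq0 subr_eq0 (negbTE z1) => /eqP.
Qed.

Section CubeRootFactors.
Variables (F : finFieldType) (theta : {rmorphism F -> F}) (n : nat).
Hypotheses (n_gt0 : (0 < n)%N) (theta_n : forall x, iter n theta x = x).
Hypothesis three_neq0 : (3%:R : F) != 0.
Variable w : F.
Hypotheses (w_prim : 3.-primitive_root w) (theta_w : theta w = w).
Local Notation t := (3%:R^-1 : F).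

Definition fw (k : nat) : {poly F} := 'X^n - (w ^+ k)%:P.

(* Lagrange idempotent: modulo x^n - w^j it is (1 + z + z^2) / 3 with z = w^(2k+j),
   that is 1 if j = k and 0 otherwise. *)
Definition idemw (k : nat) : {poly F} := quadXn n t (t * w ^+ (2 * k)) (t * w ^+ k).

Lemma idemw_mod (a b : 'I_3) : idemw a %% fw b = (a == b)%:R.
Proof.
pose z := w ^+ (2 * a + b); rewrite /idemw /fw quadXn_mod //.
have zsq : w ^+ a * (w ^+ b) ^+ 2 = z ^+ 2.
  by rewrite /z -!exprM -exprD; apply/eqP; rewrite (eq_prim_root_expr w_prim); lia.
have -> : t + t * w ^+ (2 * a) * w ^+ b + t * w ^+ a * (w ^+ b) ^+ 2 = t * (1 + z + z ^+ 2).
  by rewrite -zsq /z exprD; ring.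
have [Hab|Hab] := eqVneq a b.
  have -> : z = 1 by apply/eqP; rewrite /z Hab -(expr0 w) (eq_prim_root_expr w_prim); lia.
  rewrite mulr1n -(polyC1 F); congr _%:P.
  by rewrite -[RHS](mulVf three_neq0); ring.
have z3 : z ^+ 3 = 1.
  by apply/eqP; rewrite /z -exprM -(expr0 w) (eq_prim_root_expr w_prim); lia.
have z1 : z != 1.
  rewrite /z -(expr0 w) (eq_prim_root_expr w_prim).
  apply: contra_neq Hab => H; apply: val_inj.
  by have := ltn_ord a; have := ltn_ord b; move: H => /=; lia.
by rewrite mulr0n cube_root_sum // mulr0.
Qed.

Lemma fixed_monic_fw k : fixed_monic theta n (fw k).
Proof. by apply: fixed_monic_XnsubC; rewrite // rmorphXn theta_w. Qed.

Lemma fw_dvd k : fw k %| 'X^(3 * n) - 1.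
Proof.
apply: XnsubC_dvd; apply/eqP.
by rewrite -exprM -(expr0 w) (eq_prim_root_expr w_prim); lia.
Qed.

Lemma tnth_fw (i : 'I_3) : tnth [tuple fw 0; fw 1; fw 2] i = fw i.
Proof. by case: i => -[|[|[|]]]. Qed.

Lemma tnth_idemw (i : 'I_3) : tnth [tuple idemw 0; idemw 1; idemw 2] i = idemw i.
Proof. by case: i => -[|[|[|]]]. Qed.

Lemma crt_factors_fw : crt_factors (3 * n) (tnth [tuple fw 0; fw 1; fw 2]).
Proof.
split=> [j|y Hy Hdvd]; first by rewrite tnth_fw fw_dvd.
have cop (i j : nat) : (i < 3)%N -> (j < 3)%N -> i != j -> coprimep (fw i) (fw j).
  move=> Hi Hj Hij; apply: coprimep_XnsubC; rewrite (eq_prim_root_expr w_prim).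
  by rewrite !modn_small.
have : fw 0 * fw 1 * fw 2 %| y.
  rewrite Gauss_dvdp; last by rewrite coprimepMl !cop.
  rewrite Gauss_dvdp ?cop // -(tnth_fw ord0) -(tnth_fw (lift ord0 ord0)).
  by rewrite -(tnth_fw (lift ord0 (lift ord0 ord0))) !Hdvd.
apply: contraTeq => y0; apply/negP => /(dvdp_leq y0).
have fw0 k : fw k != 0 by case: (fixed_monic_fw k) => /monic_neq0.
have size_fw k : size (fw k) = n.+1 by case: (fixed_monic_fw k).
rewrite !size_mul ?mulf_neq0 // !size_fw (_ : _.-1 = (3 * n).+1) ?ltnNge ?Hy //; lia.
Qed.

Lemma crt_idempotents_fw :
  crt_idempotents theta (3 * n) (tnth [tuple fw 0; fw 1; fw 2])
                  (tnth [tuple idemw 0; idemw 1; idemw 2]).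
Proof.
split=> [i y|i|i j]; rewrite ?tnth_fw tnth_idemw.
- exact: smul_quadXn.
- by apply: leq_trans (size_quadXn _ _ _ _) _; lia.
exact: idemw_mod.
Qed.

Lemma skew_cyclic_decomposition3 (C : {set 'rV[F]_(3 * n)}) : skew_cyclic theta C ->
  let f (i : nat) : {poly F} := 'X^n - (w ^+ (i - 1))%:P in
  let g (i : nat) : {poly F} := 'X^n - (w ^- (i - 1))%:P in
  exists (C1 C2 C3 D1 D2 D3 : {set 'rV[F]_n}),
    [/\ [/\ skew_left_ideal theta (f 1%N) C1, skew_left_ideal theta (f 2%N) C2,
            skew_left_ideal theta (f 3%N) C3 & [/\ skew_left_ideal theta (g 1%N) D1,
            skew_left_ideal theta (g 2%N) D2 & skew_left_ideal theta (g 3%N) D3]],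
        (forall a, a \in C <->
           [/\ crt_comp theta (f 1%N) a \in C1, crt_comp theta (f 2%N) a \in C2
             & crt_comp theta (f 3%N) a \in C3]),
        #|C| = (#|C1| * #|C2| * #|C3|)%N,
        (forall a, a \in euclid_dual C <->
           [/\ crt_comp theta (g 1%N) a \in D1, crt_comp theta (g 2%N) a \in D2
             & crt_comp theta (g 3%N) a \in D3]) &
        (C = euclid_dual C <-> [/\ C1 = D1, C2 = D3 & C3 = D2])].
Proof.
move=> HC f g; have N_gt0 : (0 < 3 * n)%N by rewrite muln_gt0 n_gt0.
have w0 : w != 0 by rewrite (prim_root_eq0 w_prim).
have [-> -> ->] : [/\ f 1%N = fw 0, f 2%N = fw 1 & f 3%N = fw 2] by [].
have [-> -> ->] : [/\ g 1%N = fw 0, g 2%N = fw 2 & g 3%N = fw 1].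
  rewrite /g /fw /= expr0 invr1; split=> //; congr ('X^n - _%:P).
    by apply: (mulfI w0); rewrite mulfV // -exprS prim_expr_order.
  by apply: (mulfI (expf_neq0 2 w0)); rewrite mulfV ?expf_neq0 // -exprSr prim_expr_order.
have HD : skew_cyclic theta (euclid_dual C).
  by apply: (euclid_dual_skew_cyclic N_gt0 (iter_theta_mul theta_n 3)) => //; lia.
have [Cmem Ccard] := crt_decomposition3 N_gt0 crt_factors_fw crt_idempotents_fw
  (fixed_monic_fw 0) (fixed_monic_fw 1) (fixed_monic_fw 2) HC.
have [Dmem _] := crt_decomposition3 N_gt0 crt_factors_fw crt_idempotents_fw
  (fixed_monic_fw 0) (fixed_monic_fw 1) (fixed_monic_fw 2) HD.
exists (crt_code theta n (fw 0) C), (crt_code theta n (fw 1) C), (crt_code theta n (fw 2) C).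
exists (crt_code theta n (fw 0) (euclid_dual C)), (crt_code theta n (fw 2) (euclid_dual C)).
exists (crt_code theta n (fw 1) (euclid_dual C)).
split=> //.
- by split; [| | | split]; apply: (crt_code_left_ideal N_gt0 (fixed_monic_fw _) (fw_dvd _)).
- by move=> a; rewrite Dmem; split=> -[? ? ?].
exact: eq_set_by_components3.
Qed.

End CubeRootFactors.

Lemma expn2_mod3 k : (2 ^ k %% 3 = if odd k then 2 else 1)%N.
Proof. by elim: k => [//|k IH]; rewrite expnS -modnMmr IH /=; case: (odd k). Qed.

Lemma iter_rmorph_expr (F : fieldType) (theta : {rmorphism F -> F}) (w : F) i k :
  theta w = w ^+ i -> iter k theta w = w ^+ (i ^ k).
Proof. by move=> Hw; elim: k => [|k IH] //=; rewrite IH rmorphXn Hw -exprM expnS mulnC. Qed.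

Lemma cube_root_fixed (F : fieldType) (theta : {rmorphism F -> F}) (w : F) k :
  odd k -> (forall x, iter k theta x = x) -> 3.-primitive_root w -> theta w = w.
Proof.
move=> k_odd theta_k w_prim.
have w3 : theta w ^+ 3 = 1 by rewrite -rmorphXn prim_expr_order // rmorph1.
have [i Hi] := prim_rootP w_prim w3.
have /eqP := theta_k w; rewrite (iter_rmorph_expr _ Hi) -{2}(expr1 w).
rewrite (eq_prim_root_expr w_prim) Hi.
case: i {Hi} => -[|[|[|//]]] _ /=; rewrite ?expr1 //.
  by rewrite exp0n ?mod0n // lt0n; case: k k_odd {theta_k}.
by rewrite expn2_mod3 k_odd.
Qed.

Lemma char_neq3 (F : finFieldType) p m : prime p -> (p %% 3 = 2)%N -> #|F| = (p ^ m)%N ->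
  (3%:R : F) != 0.
Proof.
move=> p_pr p3 cardF; rewrite -(dvdn_pcharf (card_finPcharP cardF p_pr)).
apply/negP => p_dvd; have := dvdn_leq (isT : (0 < 3)%N) p_dvd; move: p3 p_dvd.
by case: p {p_pr cardF} => [|[|[|[|]]]].
Qed.

Theorem theorem4p3 (F : finFieldType) (p m s : nat) (theta : {rmorphism F -> F}) :
  prime p -> odd p -> (p %% 3 = 2)%N -> #|F| = (p ^ m)%N ->
  bijective theta ->
  (forall x : F, iter (p ^ s) theta x = x) ->
  forall C : {set 'rV[F]_(3 * p ^ s)},
  skew_cyclic theta C ->
  (odd m ->
     let f1 : {poly F} := 'X^(p ^ s) - 1 in
     let f2 : {poly F} := 'X^(2 * p ^ s) + 'X^(p ^ s) + 1 in
     [/\ 'X^(3 * p ^ s) - 1 = smul theta f1 f2,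
         (forall a, smul theta a f1 = smul theta f1 a),
         (forall a, smul theta a f2 = smul theta f2 a),
         (exists u v, smul theta u f1 + smul theta v f2 = 1) &
     exists (C1 : {set 'rV[F]_(p ^ s)}) (C2 : {set 'rV[F]_(2 * p ^ s)})
            (D1 : {set 'rV[F]_(p ^ s)}) (D2 : {set 'rV[F]_(2 * p ^ s)}),
       [/\ [/\ skew_left_ideal theta f1 C1, skew_left_ideal theta f2 C2,
               skew_left_ideal theta f1 D1 & skew_left_ideal theta f2 D2],
           (forall a, a \in C <-> (crt_comp theta f1 a \in C1 /\ crt_comp theta f2 a \in C2)),
           #|C| = (#|C1| * #|C2|)%N,
           (forall a, a \in euclid_dual C <-> (crt_comp theta f1 a \in D1 /\ crt_comp theta f2 a \in D2)) &
           (C = euclid_dual C <-> (C1 = D1 /\ C2 = D2))]]) /\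
  (~~ odd m -> forall w : F, 3.-primitive_root w ->
     let f (i : nat) : {poly F} := 'X^(p ^ s) - (w ^+ (i - 1))%:P in
     let g (i : nat) : {poly F} := 'X^(p ^ s) - (w ^- (i - 1))%:P in
     exists (C1 C2 C3 D1 D2 D3 : {set 'rV[F]_(p ^ s)}),
       [/\ [/\ skew_left_ideal theta (f 1%N) C1, skew_left_ideal theta (f 2%N) C2,
               skew_left_ideal theta (f 3%N) C3 & [/\ skew_left_ideal theta (g 1%N) D1,
               skew_left_ideal theta (g 2%N) D2 & skew_left_ideal theta (g 3%N) D3]],
           (forall a, a \in C <->
              [/\ crt_comp theta (f 1%N) a \in C1, crt_comp theta (f 2%N) a \in C2
                & crt_comp theta (f 3%N) a \in C3]),
           #|C| = (#|C1| * #|C2| * #|C3|)%N,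
           (forall a, a \in euclid_dual C <->
              [/\ crt_comp theta (g 1%N) a \in D1, crt_comp theta (g 2%N) a \in D2
                & crt_comp theta (g 3%N) a \in D3]) &
           (C = euclid_dual C <-> [/\ C1 = D1, C2 = D3 & C3 = D2])]).
Proof.
move=> p_pr p_odd p3 cardF _ theta_ps C HC.
have ps_gt0 : (0 < p ^ s)%N by rewrite expn_gt0 prime_gt0.
have three_neq0 := char_neq3 p_pr p3 cardF.
split=> [_ | _ w w_prim].
  exact: skew_cyclic_decomposition2.
have ps_odd : odd (p ^ s) by rewrite oddX p_odd orbT.
have theta_w := cube_root_fixed ps_odd theta_ps w_prim.
exact: skew_cyclic_decomposition3.
Qed.
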